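(* Let $(\Omega,\mathcal A)$ be a Borel space, $(\Omega,X_\bullet)$ a Borel field of proper unbounded CAT(0) spaces, $x_\bullet\in\mathcal L(\Omega,X_\bullet)$ and $\xi_\bullet\in\mathcal L(\Omega,\partial X_\bullet)$. For $t\ge0$ let $c_{x_\bullet,\xi_\bullet}(t)$ be the section $\omega\mapsto c_{x_\omega,\xi_\omega}(t)$, where $c_{x_\omega,\xi_\omega}:[0,\infty)\to X_\omega$ is the unique geodesic ray with $c(0)=x_\omega$ and $c(\infty)=\xi_\omega$. Then $c_{x_\bullet,\xi_\bullet}(t)\in\mathcal L(\Omega,X_\bullet)$ for every $t\ge0$.
   Context: Borel field of metric spaces: $(X_\omega,d_\omega)_{\omega\in\Omega}$ metric spaces; a section is $x_\bullet=(x_\omega)$, $x_\omega\in X_\omega$. A Borel structure is a set $\mathcal L(\Omega,X_\bullet)$ of sections such that (a) $\omega\mapsto d_\omega(x_\omega,y_\omega)$ is Borel for all $x_\bullet,y_\bullet\in\mathcal L$; (b) any section $y_\bullet$ with $\omega\mapsto d_\omega(x_\omega,y_\omega)$ Borel for all $x_\bullet\in\mathcal L$ lies in $\mathcal L$; (c) there is a countable $\mathcal D=\{x^n_\bullet\}\subseteq\mathcal L$ with $\{x^n_\omega\}_n$ dense in $X_\omega$ for all $\omega$; elements of $\mathcal L$ are Borel sections. Boundary field: fix $x^0_\bullet\in\mathcal L(\Omega,X_\bullet)$; for $\xi\in\partial X_\omega$ (visual boundary, cone topology), $b_{x^0_\omega,\xi}(x)=\lim_{t\to\infty}(d_\omega(x,c(t))-d_\omega(x^0_\omega,c(t)))$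 with $c$ the ray from $x^0_\omega$ to $\xi$. A section $\xi_\bullet$ of $\partial X_\bullet$ is Borel, $\xi_\bullet\in\mathcal L(\Omega,\partial X_\bullet)$, iff $\omega\mapsto b_{x^0_\omega,\xi_\omega}(x_\omega)$ is Borel for every $x_\bullet\in\mathcal L(\Omega,X_\bullet)$ (this does not depend on $x^0_\bullet$). *)

From Stdlib Require Import Reals List.
Open Scope R_scope.

Record SigmaAlgebra (Om : Type) := {
  meas : (Om -> Prop) -> Prop;
  meas_full : meas (fun _ => True);
  meas_compl : forall A, meas A -> meas (fun w => ~ A w);
  meas_cunion : forall A : nat -> Om -> Prop,
      (forall n, meas (A n)) -> meas (fun w => exists n, A n w)
}.
Arguments meas {Om} s _.

Definition BorelFun {Om : Type} (S : SigmaAlgebra Om) (f : Om -> R) : Prop :=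
  forall a : R, meas S (fun w => f w < a).

Definition IsMetric {X : Type} (d : X -> X -> R) : Prop :=
  (forall x y, d x y = 0 <-> x = y) /\
  (forall x y, d x y = d y x) /\
  (forall x y z, d x z <= d x y + d y z).

Definition IsOpen {X : Type} (d : X -> X -> R) (U : X -> Prop) : Prop :=
  forall x, U x -> exists r, 0 < r /\ forall y, d x y < r -> U y.

Definition IsCompact {X : Type} (d : X -> X -> R) (K : X -> Prop) : Prop :=
  forall (I : Type) (U : I -> X -> Prop),
    (forall i, IsOpen d (U i)) ->
    (forall x, K x -> exists i, U i x) ->
    exists l : list I, forall x, K x -> exists i, In i l /\ U i x.

Definition Proper {X : Type} (d : X -> X -> R) : Prop :=
  forall (x : X) (r : R), IsCompact d (fun y => d x y <= r).

Definition Unbounded {X : Type} (d : X -> X -> R) : Prop :=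
  forall M : R, exists x y : X, M < d x y.

Definition GeodSeg {X : Type} (d : X -> X -> R) (c : R -> X) (x y : X) : Prop :=
  c 0 = x /\ c (d x y) = y /\
  forall s t, 0 <= s <= d x y -> 0 <= t <= d x y -> d (c s) (c t) = Rabs (s - t).

Definition GeodesicSpace {X : Type} (d : X -> X -> R) : Prop :=
  forall x y, exists c, GeodSeg d c x y.

Definition eucl (p q : R * R) : R :=
  sqrt ((fst p - fst q) ^ 2 + (snd p - snd q) ^ 2).

Definition comb (p q : R * R) (lam : R) : R * R :=
  (fst p + lam * (fst q - fst p), snd p + lam * (snd q - snd p)).

(* CAT(0) inequality for geodesic triangles (Bridson-Haefliger), for points
   on the two sides issuing from the vertex x (other pairs of sides are
   covered by relabelling the triangle; pairs on one side are trivial). *)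
Definition CAT0 {X : Type} (d : X -> X -> R) : Prop :=
  GeodesicSpace d /\
  forall (x y z : X) (c1 c2 c3 : R -> X) (xb yb zb : R * R),
    GeodSeg d c1 x y -> GeodSeg d c2 x z -> GeodSeg d c3 y z ->
    eucl xb yb = d x y -> eucl xb zb = d x z -> eucl yb zb = d y z ->
    forall s t, 0 <= s <= d x y -> 0 <= t <= d x z ->
      d (c1 s) (c2 t) <= eucl (comb xb yb (s / d x y)) (comb xb zb (t / d x z)).

Definition IsRay {X : Type} (d : X -> X -> R) (c : R -> X) : Prop :=
  forall s t, 0 <= s -> 0 <= t -> d (c s) (c t) = Rabs (s - t).

(* asymptotic rays = same point of the visual boundary *)
Definition Asymp {X : Type} (d : X -> X -> R) (c c' : R -> X) : Prop :=
  exists K, forall t, 0 <= t -> d (c t) (c' t) <= K.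

(* c is a geodesic ray from x to the boundary point represented by the ray xi *)
Definition RayTo {X : Type} (d : X -> X -> R) (c : R -> X) (x : X) (xi : R -> X) : Prop :=
  IsRay d c /\ c 0 = x /\ Asymp d c xi.

Definition LimInfty (f : R -> R) (l : R) : Prop :=
  forall eps, 0 < eps -> exists T, forall t, T <= t -> Rabs (f t - l) < eps.

Definition BusemannVal {X : Type} (d : X -> X -> R) (x0 : X) (xi : R -> X) (x : X) (b : R) : Prop :=
  exists c, RayTo d c x0 xi /\ LimInfty (fun t => d x (c t) - d x0 (c t)) b.

Definition BorelStructure {Om : Type} (S : SigmaAlgebra Om) (X : Om -> Type)
    (d : forall w, X w -> X w -> R) (L : (forall w, X w) -> Prop) : Prop :=
  (forall x y, L x -> L y -> BorelFun S (fun w => d w (x w) (y w))) /\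
  (forall y, (forall x, L x -> BorelFun S (fun w => d w (x w) (y w))) -> L y) /\
  (exists D : nat -> forall w, X w,
      (forall n, L (D n)) /\
      forall w (z : X w) eps, 0 < eps -> exists n, d w z (D n w) < eps).

(* xi (a section of boundary points, each represented by a ray) is a Borel
   section w.r.t. the base section x0 *)
Definition BorelBoundarySection {Om : Type} (S : SigmaAlgebra Om) (X : Om -> Type)
    (d : forall w, X w -> X w -> R) (L : (forall w, X w) -> Prop)
    (x0 : forall w, X w) (xi : forall w, R -> X w) : Prop :=
  forall x, L x -> exists g : Om -> R, BorelFun S g /\
    forall w, BusemannVal (d w) (x0 w) (xi w) (x w) (g w).

From Stdlib Require Import Reals Lra Psatz ZArith Classical FunctionalExtensionality PropExtensionality IndefiniteDescription.
Open Scope R_scope.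

(* Fix w and let c be the ray from x to xi, s = c t, and b = b_{x0,xi} the
   Busemann function.  Since b is 1-Lipschitz and decreases with unit speed
   along c, b(z) - b(x) <= -t + d(z,s) for every z; conversely, by the CAT(0)
   comparison inequality, a point z with d(x,z) < t + del and
   b(z) - b(x) < -t + del lies within sqrt(4 t del + del^2) of s.  Hence the
   sets  A_{k,n} = { d(x,D_n) < t + del_k  and  b(D_n) - b(x) < -t + del_k },
   for D a dense sequence of Borel sections and del_k suitably small, are
   measurable, force D_n to be 1/(k+1)-close to s, and cover every fiber.
   A general criterion (a section "located" by such sets is Borel) finishes. *)

Section Metric.
Context {X : Type} (d : X -> X -> R) (Hm : IsMetric d).

Lemma met_refl x : d x x = 0.
Proof. apply (proj1 Hm); reflexivity. Qed.

Lemma met_sym x y : d x y = d y x.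
Proof. exact (proj1 (proj2 Hm) x y). Qed.

Lemma met_tri x y z : d x z <= d x y + d y z.
Proof. exact (proj2 (proj2 Hm) x y z). Qed.

Lemma met_pos x y : 0 <= d x y.
Proof. pose proof (met_tri x y x); rewrite met_refl, (met_sym y x) in H; lra. Qed.

End Metric.

Lemma geodseg_point_dist {X} (d : X -> X -> R) g x p t :
  GeodSeg d g x p -> 0 <= t <= d x p -> d x (g t) = t /\ d (g t) p = d x p - t.
Proof.
  intros [G0 [G1 G2]] Ht; split.
  - rewrite <- G0, G2 by lra; rewrite Rabs_left1; lra.
  - rewrite <- G1 at 1; rewrite G2 by lra; rewrite Rabs_left1; lra.
Qed.

Lemma ray_segment {X} (d : X -> X -> R) c x T :
  IsRay d c -> c 0 = x -> 0 <= T -> d x (c T) = T /\ GeodSeg d c x (c T).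
Proof.
  intros Hr H0 HT.
  assert (E : d x (c T) = T) by (subst x; rewrite Hr, Rabs_left1; lra).
  split; [exact E|]; unfold GeodSeg; rewrite E.
  split; [exact H0|]; split; [reflexivity|]; intros; apply Hr; lra.
Qed.

Lemma comparison_triangle a b e : 0 < a -> 0 <= b -> 0 <= e ->
  a <= b + e -> b <= a + e -> e <= a + b ->
  exists u v, eucl (0,0) (a,0) = a /\ eucl (0,0) (u,v) = b /\
    eucl (a,0) (u,v) = e /\ 2 * a * u = a^2 + b^2 - e^2 /\ v^2 = b^2 - u^2.
Proof.
  intros Ha Hb He T1 T2 T3.
  set (u := (a^2 + b^2 - e^2) / (2*a)).
  assert (Hu : 2 * a * u = a^2 + b^2 - e^2) by (unfold u; field; lra).
  assert (Hub : - b <= u <= b) by (split; nra).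
  assert (Hv0 : 0 <= b^2 - u^2) by nra.
  pose proof (pow2_sqrt _ Hv0) as Hv; set (v := sqrt (b^2 - u^2)) in Hv.
  exists u, v; unfold eucl; cbn [fst snd]; repeat split; auto.
  - replace ((0-a)^2 + (0-0)^2) with (a^2) by ring; apply sqrt_pow2; lra.
  - replace ((0-u)^2 + (0-v)^2) with (b^2) by nra; apply sqrt_pow2; lra.
  - replace ((a-u)^2 + (0-v)^2) with (e^2) by nra; apply sqrt_pow2; lra.
Qed.

(* Squared distance between the points at parameters s, t on the two sides
   from (0,0) of that comparison triangle (Euclidean law of cosines). *)
Lemma comparison_distance a b s t u v : a <> 0 -> b <> 0 -> v^2 = b^2 - u^2 ->
  (0 + s/a*(a-0) - (0 + t/b*(u-0)))^2 + (0 + s/a*(0-0) - (0 + t/b*(v-0)))^2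
  = s^2 + t^2 - 2*s*t*u/b.
Proof.
  intros Ha Hb Hv.
  replace ((0 + s/a*(0-0) - (0 + t/b*(v-0)))^2) with ((t/b)^2 * v^2) by (field; auto).
  rewrite Hv; field; auto.
Qed.

Section CAT0Geometry.
Context {X : Type} (d : X -> X -> R) (Hm : IsMetric d) (Hc : CAT0 d).

(* The CAT(0) inequality in law-of-cosines form (denominators cleared). *)
Lemma cat0_cosine x y z c1 c2 :
  GeodSeg d c1 x y -> GeodSeg d c2 x z -> 0 < d x y -> 0 < d x z ->
  forall s t, 0 <= s <= d x y -> 0 <= t <= d x z ->
  d x y * d x z * (d (c1 s) (c2 t))^2 <=
  d x y * d x z * (s^2 + t^2) - s * t * (d x y ^2 + d x z ^2 - d y z ^2).
Proof.
  intros G1 G2 Ha Hb s t Hs Ht.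
  destruct Hc as [Hgeo Hcat]; destruct (Hgeo y z) as [c3 G3].
  pose proof (met_tri d Hm x z y); pose proof (met_tri d Hm x y z);
    pose proof (met_tri d Hm y x z).
  rewrite (met_sym d Hm z y) in *; rewrite (met_sym d Hm y x) in *.
  destruct (comparison_triangle (d x y) (d x z) (d y z)) as [u [v [E1 [E2 [E3 [Hu Hv]]]]]];
    try lra; try apply (met_pos d Hm).
  specialize (Hcat x y z c1 c2 c3 (0,0) (d x y, 0) (u,v) G1 G2 G3 E1 E2 E3 s t Hs Ht).
  unfold eucl, comb in Hcat; cbn [fst snd] in Hcat.
  rewrite comparison_distance in Hcat by (auto; lra).
  pose proof (met_pos d Hm (c1 s) (c2 t)).
  assert (Hsq : d (c1 s) (c2 t) ^2 <= s^2 + t^2 - 2*s*t*u/d x z).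
  { apply Rle_trans with (sqrt (s^2 + t^2 - 2*s*t*u/d x z) ^ 2); [apply pow_incr; lra|].
    rewrite pow2_sqrt; [lra|]. rewrite <- comparison_distance with (a := d x y) (v := v) by (auto; lra).
    apply Rplus_le_le_0_compat; apply pow2_ge_0. }
  apply Rmult_le_compat_l with (r := d x y * d x z) in Hsq; [|nra].
  replace (d x y * d x z * (s^2 + t^2 - 2*s*t*u/d x z))
    with (d x y * d x z * (s^2 + t^2) - s*t*(2*d x y*u)) in Hsq by (field; lra).
  rewrite Hu in Hsq; exact Hsq.
Qed.

Lemma cat0_same_time x y z c1 c2 :
  GeodSeg d c1 x y -> GeodSeg d c2 x z -> 0 < d x y -> 0 < d x z ->
  forall t, 0 <= t -> t <= d x y -> t <= d x z ->
  d x y * d x z * (d (c1 t) (c2 t))^2 <= t^2 * d y z ^2.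
Proof.
  intros G1 G2 Ha Hb t H0 H1 H2.
  pose proof (cat0_cosine x y z c1 c2 G1 G2 Ha Hb t t (conj H0 H1) (conj H0 H2)).
  assert (0 <= t^2 * (d x y - d x z)^2) by (apply Rmult_le_pos; apply pow2_ge_0).
  lra.
Qed.

Lemma cat0_pinch x p z g : GeodSeg d g x p -> 0 < d x p ->
  forall t del, 0 <= t -> 0 <= del -> t <= d x p ->
  d x z <= t + del -> d z p <= d x p - t + del ->
  d (g t) z ^2 <= 4*t*del + del^2.
Proof.
  intros G HD t del Ht Hdel HtD Hb HE.
  pose proof (met_pos d Hm x z) as Hb0.
  destruct (Req_dec (d x z) 0) as [Z|Z].
  - assert (x = z) by (apply Hm; auto); subst z.
    rewrite (met_sym d Hm), (proj1 (geodseg_point_dist d g x p t G ltac:(lra))).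
    nra.
  - destruct (proj1 Hc x z) as [c2 G2].
    pose proof (cat0_cosine x p z g c2 G G2 HD ltac:(lra) t (d x z)
                  (conj Ht HtD) (conj Hb0 (Rle_refl _))) as H.
    rewrite (proj1 (proj2 G2)), (met_sym d Hm p z) in H.
    pose proof (met_pos d Hm z p).
    assert (H' : d x p * d (g t) z ^2 <=
                 d x p * (t^2 + d x z ^2) - t * (d x p ^2 + d x z ^2 - d z p ^2))
      by (apply Rmult_le_reg_l with (d x z); nra).
    assert (d z p ^2 <= (d x p - t + del)^2) by nra.
    assert (d x z ^2 <= (t + del)^2) by nra.
    apply Rmult_le_reg_l with (d x p); nra.
Qed.

Lemma ray_uniqueness c1 c2 K :
  IsRay d c1 -> IsRay d c2 -> c1 0 = c2 0 ->
  (forall T, 0 <= T -> d (c1 T) (c2 T) <= K) -> forall t, 0 <= t -> c1 t = c2 t.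
Proof.
  intros R1 R2 E0 HK t Ht.
  apply Hm; pose proof (met_pos d Hm (c1 t) (c2 t)) as Hq.
  destruct (Rle_lt_dec (d (c1 t) (c2 t)) 0) as [L|L]; [lra|exfalso].
  set (q := d (c1 t) (c2 t)) in *.
  assert (HK0 : 0 <= K)
    by (specialize (HK 0 (Rle_refl _)); pose proof (met_pos d Hm (c1 0) (c2 0)); lra).
  set (T := t + 1 + 2 * t * K / q).
  assert (HTq : T * q = (t+1) * q + 2 * t * K) by (unfold T; field; lra).
  assert (HT1 : t + 1 <= T) by (unfold T; assert (0 <= 2 * t * K / q)
      by (apply Rmult_le_pos; [nra| apply Rlt_le, Rinv_0_lt_compat; lra]); lra).
  destruct (ray_segment d c1 (c1 0) T R1 eq_refl ltac:(lra)) as [D1 G1].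
  destruct (ray_segment d c2 (c1 0) T R2 (eq_sym E0) ltac:(lra)) as [D2 G2].
  pose proof (cat0_same_time _ _ _ c1 c2 G1 G2 ltac:(lra) ltac:(lra) t Ht ltac:(lra) ltac:(lra)) as H.
  rewrite D1, D2 in H; fold q in H.
  pose proof (HK T ltac:(lra)); pose proof (met_pos d Hm (c1 T) (c2 T)).
  assert (d (c1 T) (c2 T) ^2 <= K^2) by nra.
  assert (T * T * q^2 <= t^2 * K^2) by nra.
  assert (0 <= t * K) by nra.
  assert (T * q >= 2 * t * K + q) by nra.
  assert ((2*t*K + q)^2 <= (T*q)^2) by (apply pow_incr; lra).
  nra.
Qed.

Lemma segments_converge_to_ray c cb x x0 K t eta :
  IsRay d c -> c 0 = x -> IsRay d cb -> cb 0 = x0 ->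
  (forall T, 0 <= T -> d (c T) (cb T) <= K) -> 0 <= t -> 0 < eta ->
  exists T0, forall T, T0 <= T -> 0 < d x (cb T) /\ t <= d x (cb T) /\
    forall g, GeodSeg d g x (cb T) -> d (c t) (g t) < eta.
Proof.
  intros Rc Hc0 Rb Hb0 HK Ht He.
  pose proof (met_pos d Hm x x0); set (d0 := d x x0) in *.
  assert (HK0 : 0 <= K)
    by (specialize (HK 0 (Rle_refl _)); pose proof (met_pos d Hm (c 0) (cb 0)); lra).
  set (M := 2 * t^2 * K^2 / eta^2).
  assert (HM : M * eta^2 = 2 * t^2 * K^2) by (unfold M; field; lra).
  assert (HM0 : 0 <= M) by (unfold M; apply Rmult_le_pos; [nra| apply Rlt_le, Rinv_0_lt_compat; nra]).
  exists (2 * d0 + 2 * t + 1 + M); intros T HT.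
  destruct (ray_segment d cb x0 T Rb Hb0 ltac:(lra)) as [DT _].
  assert (HD : T - d0 <= d x (cb T))
    by (pose proof (met_tri d Hm x0 x (cb T)); rewrite (met_sym d Hm x0 x) in H0; fold d0 in H0; lra).
  set (D := d x (cb T)) in *.
  repeat split; try lra; intros g G.
  destruct (ray_segment d c x T Rc Hc0 ltac:(lra)) as [DC GC].
  assert (HDp : 0 < D) by lra; assert (HtD : t <= D) by lra.
  pose proof (cat0_same_time x (c T) (cb T) c g GC G ltac:(lra) HDp t Ht ltac:(lra) HtD) as Hcmp.
  rewrite DC in Hcmp; fold D in Hcmp.
  pose proof (met_pos d Hm (c t) (g t)); set (q := d (c t) (g t)) in *.
  pose proof (HK T ltac:(lra)); pose proof (met_pos d Hm (c T) (cb T)).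
  assert (d (c T) (cb T) ^2 <= K^2) by nra.
  assert (T * D * q^2 <= t^2 * K^2) by nra.
  destruct (Rlt_le_dec q eta) as [L|L]; [exact L|exfalso].
  assert (q^2 >= eta^2) by nra.
  assert (T * D >= T / 2) by nra.
  assert (T * D * q^2 >= T/2 * eta^2) by nra.
  assert (T * eta^2 >= (M + 1) * eta^2) by nra.
  nra.
Qed.

End CAT0Geometry.

Section Busemann.
Context {X : Type} (d : X -> X -> R) (Hm : IsMetric d) (Hc : CAT0 d).
Variables (x0 : X) (xi : R -> X).

Lemma asymp_bound c1 c2 K1 K2 :
  (forall T, 0 <= T -> d (c1 T) (xi T) <= K1) ->
  (forall T, 0 <= T -> d (c2 T) (xi T) <= K2) ->
  forall T, 0 <= T -> d (c1 T) (c2 T) <= K1 + K2.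
Proof.
  intros H1 H2 T HT; pose proof (met_tri d Hm (c1 T) (xi T) (c2 T)).
  rewrite (met_sym d Hm (xi T)) in H; specialize (H1 T HT); specialize (H2 T HT); lra.
Qed.

Lemma busemann_along_ray cb K z gz :
  IsRay d cb -> cb 0 = x0 -> (forall T, 0 <= T -> d (cb T) (xi T) <= K) ->
  BusemannVal d x0 xi z gz ->
  forall eps, 0 < eps -> exists Tz, forall T, Tz <= T ->
    Rabs (d z (cb T) - d x0 (cb T) - gz) < eps.
Proof.
  intros Rb Hb0 HK [cz [[Rz [Hz0 [K3 HK3]]] Lz]] eps He.
  destruct (Lz eps He) as [T1 H1].
  assert (U : forall t, 0 <= t -> cz t = cb t)
    by (apply (ray_uniqueness d Hm Hc cz cb (K3 + K)); auto; [congruence|]; apply asymp_bound; auto).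
  exists (Rmax T1 0); intros T HT.
  pose proof (Rmax_l T1 0); pose proof (Rmax_r T1 0).
  rewrite <- U by lra; apply H1; lra.
Qed.

Variables (x : X) (c : R -> X) (t gx : R).
Hypotheses (Hc_ray : RayTo d c x xi) (Ht : 0 <= t) (Hgx : BusemannVal d x0 xi x gx).

Lemma busemann_test_point z gz eta eps :
  BusemannVal d x0 xi z gz -> 0 < eta -> 0 < eps ->
  exists p g, GeodSeg d g x p /\ 0 < d x p /\ t <= d x p /\ d (c t) (g t) < eta /\
    Rabs (d x p - d x0 p - gx) < eps /\ Rabs (d z p - d x0 p - gz) < eps.
Proof.
  intros Hgz He He'.
  destruct Hc_ray as [Rc [Hc0 [K1 HK1]]].
  destruct Hgx as [cb [[Rb [Hb0 [K2 HK2]]] _]].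
  destruct (busemann_along_ray cb K2 x gx Rb Hb0 HK2 Hgx eps He') as [Tx HTx].
  destruct (busemann_along_ray cb K2 z gz Rb Hb0 HK2 Hgz eps He') as [Tz HTz].
  destruct (segments_converge_to_ray d Hm Hc c cb x x0 (K1 + K2) t eta Rc Hc0 Rb Hb0
              (asymp_bound c cb K1 K2 HK1 HK2) Ht He) as [T0 HT0].
  set (T := Rmax T0 (Rmax Tx Tz)).
  pose proof (Rmax_l T0 (Rmax Tx Tz)); pose proof (Rmax_r T0 (Rmax Tx Tz));
    pose proof (Rmax_l Tx Tz); pose proof (Rmax_r Tx Tz).
  destruct (HT0 T ltac:(unfold T; lra)) as [HDp [HtD Hg]].
  destruct (proj1 Hc x (cb T)) as [g G].
  exists (cb T), g.
  refine (conj G (conj HDp (conj HtD (conj (Hg g G) (conj _ _)))));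
    [apply HTx | apply HTz]; unfold T; lra.
Qed.

(* The Busemann function is 1-Lipschitz and drops by t from x to c t. *)
Lemma busemann_slope z gz :
  BusemannVal d x0 xi z gz -> gz - gx <= - t + d z (c t).
Proof.
  intros Hgz; apply Rle_plus_epsilon; intros eps He.
  destruct (busemann_test_point z gz (eps/4) (eps/4) Hgz ltac:(lra) ltac:(lra))
    as [p [g [G [Hp [Htp [Hnear [Bx Bz]]]]]]].
  apply Rabs_def2 in Bx; apply Rabs_def2 in Bz.
  pose proof (proj2 (geodseg_point_dist d g x p t G ltac:(lra))).
  pose proof (met_tri d Hm z (c t) p); pose proof (met_tri d Hm (c t) (g t) p).
  lra.
Qed.

Lemma busemann_pinch z gz del :
  BusemannVal d x0 xi z gz -> 0 <= del -> d x z < t + del -> gz - gx < - t + del ->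
  d z (c t) <= sqrt (4 * t * del + del^2).
Proof.
  intros Hgz Hdel Hxz Hlt; apply Rle_plus_epsilon; intros eps He.
  set (m := - t + del - (gz - gx)).
  destruct (busemann_test_point z gz eps (m/2) Hgz He ltac:(unfold m; lra))
    as [p [g [G [Hp [Htp [Hnear [Bx Bz]]]]]]].
  apply Rabs_def2 in Bx; apply Rabs_def2 in Bz.
  pose proof (cat0_pinch d Hm Hc x p z g G Hp t del Ht Hdel Htp ltac:(lra)
                ltac:(unfold m in *; lra)) as HS.
  assert (Hq : d (g t) z <= sqrt (4 * t * del + del ^ 2))
    by (rewrite <- (sqrt_pow2 (d (g t) z)) by apply (met_pos d Hm); apply sqrt_le_1_alt; exact HS).
  pose proof (met_tri d Hm z (g t) (c t)).
  rewrite (met_sym d Hm z (g t)), (met_sym d Hm (g t) (c t)) in H.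
  lra.
Qed.

(* The tolerance del = r^2/(4t+2) turns the pinching bound into < r. *)
Lemma tolerance_facts r : 0 < r <= 1 ->
  0 < r^2/(4*t+2) /\ r^2/(4*t+2) <= r /\
  sqrt (4 * t * (r^2/(4*t+2)) + (r^2/(4*t+2))^2) < r.
Proof.
  intros Hr; set (del := r^2/(4*t+2)).
  assert (E : del * (4*t+2) = r^2) by (unfold del; field; lra).
  assert (0 < del) by (unfold del; apply Rdiv_lt_0_compat; nra).
  assert (del <= 1/2) by nra.
  split; [lra|]; split; [nra|].
  rewrite <- (sqrt_pow2 r) at 1 by lra; apply sqrt_lt_1_alt; split; nra.
Qed.

Lemma ray_point_located r z gz : 0 < r <= 1 -> BusemannVal d x0 xi z gz ->
  (d z (c t) < r^2/(4*t+2) -> d x z < t + r^2/(4*t+2) /\ gz - gx < - t + r^2/(4*t+2)) /\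
  (d x z < t + r^2/(4*t+2) -> gz - gx < - t + r^2/(4*t+2) -> d z (c t) < r).
Proof.
  intros Hr Hgz; destruct (tolerance_facts r Hr) as [D1 [D2 D3]].
  pose proof (busemann_slope z gz Hgz).
  pose proof (proj1 (ray_segment d c x t (proj1 Hc_ray) (proj1 (proj2 Hc_ray)) Ht)).
  pose proof (met_tri d Hm x (c t) z); rewrite (met_sym d Hm (c t) z) in H1.
  split; [intros; split; lra|].
  intros; pose proof (busemann_pinch z gz (r^2/(4*t+2)) Hgz ltac:(lra) H2 H3); lra.
Qed.

End Busemann.

Section Measurability.
Context {Om : Type} (S : SigmaAlgebra Om).

Lemma meas_ext (A B : Om -> Prop) : (forall w, A w <-> B w) -> meas S A -> meas S B.
Proof.
  intros H HA; replace B with A; auto.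
  apply functional_extensionality; intro w; apply propositional_extensionality; auto.
Qed.

Lemma meas_union2 A B : meas S A -> meas S B -> meas S (fun w => A w \/ B w).
Proof.
  intros HA HB; apply meas_ext with (A := fun w => exists n, (match n with O => A | _ => B end) w).
  - intros w; split; [intros [[|n] H]; auto | intros [H|H]; [exists O|exists 1%nat]; auto].
  - apply meas_cunion; intros [|n]; auto.
Qed.

Lemma meas_inter2 A B : meas S A -> meas S B -> meas S (fun w => A w /\ B w).
Proof.
  intros HA HB; apply meas_ext with (A := fun w => ~ (~ A w \/ ~ B w)).
  - intros w; split; [intro H; split; apply NNPP; tauto | tauto].
  - apply meas_compl, meas_union2; apply meas_compl; auto.
Qed.

Lemma arch_inv eps : 0 < eps -> exists m : nat, / (INR m + 1) < eps.
Proof.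
  intros He; destruct (archimed_cor1 eps He) as [N [H1 H2]]; exists N.
  eapply Rlt_trans; [|exact H1]; apply Rinv_lt_contravar; [|lra].
  apply Rmult_lt_0_compat; [apply lt_0_INR; auto | pose proof (pos_INR N); lra].
Qed.

Lemma IZR_as_nat_diff z : IZR z = INR (Z.to_nat z) - INR (Z.to_nat (- z)).
Proof.
  assert (Z0 : forall y, (y <= 0)%Z -> Z.to_nat y = 0%nat)
    by (intros [|y|y] Hy; [reflexivity | lia | reflexivity]).
  rewrite !INR_IZR_INZ; destruct (Z_le_gt_dec 0 z).
  - rewrite Z2Nat.id, (Z0 (-z)%Z) by lia; simpl; lra.
  - rewrite (Z0 z), Z2Nat.id by lia; simpl; rewrite opp_IZR; lra.
Qed.

Lemma rationals_dense l h : l < h -> exists i j m : nat, l < (INR i - INR j) / (INR m + 1) < h.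
Proof.
  intros Hlh; destruct (arch_inv (h - l) ltac:(lra)) as [m Hm].
  set (k := INR m + 1) in *; assert (Hk : 0 < k) by (unfold k; pose proof (pos_INR m); lra).
  destruct (archimed (l * k)) as [A1 A2].
  exists (Z.to_nat (up (l*k))), (Z.to_nat (- up (l*k))), m; fold k.
  rewrite <- IZR_as_nat_diff; set (N := IZR (up (l*k))) in *.
  assert (E : N / k = l + (N - l*k) * / k) by (field; lra).
  assert (0 < / k) by (apply Rinv_0_lt_compat; lra).
  rewrite E; assert (0 < (N - l*k) * / k) by (apply Rmult_lt_0_compat; lra).
  assert ((N - l*k) * / k <= 1 * / k) by (apply Rmult_le_compat_r; lra).
  split; lra.
Qed.

Lemma borel_gt f c : BorelFun S f -> meas S (fun w => c < f w).
Proof.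
  intros Hf; apply meas_ext with (A := fun w => exists m : nat, ~ (f w < c + / (INR m + 1))).
  - intros w; split.
    + intros [m H]; assert (0 < / (INR m + 1))
        by (apply Rinv_0_lt_compat; pose proof (pos_INR m); lra); lra.
    + intros H; destruct (arch_inv (f w - c) ltac:(lra)) as [m Hm]; exists m; lra.
  - apply meas_cunion; intro m; apply meas_compl, Hf.
Qed.

Lemma borel_diff f g : BorelFun S f -> BorelFun S g -> BorelFun S (fun w => f w - g w).
Proof.
  intros Hf Hg a; set (q := fun i j m : nat => (INR i - INR j) / (INR m + 1)).
  apply meas_ext with (A := fun w => exists i j m : nat, f w < q i j m /\ q i j m - a < g w).
  - intros w; split.
    + intros [i [j [m H]]]; lra.
    + intros H; destruct (rationals_dense (f w) (g w + a) ltac:(lra)) as [i [j [m Hq]]].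
      exists i, j, m; fold (q i j m) in Hq; lra.
  - apply meas_cunion; intro i; apply meas_cunion; intro j; apply meas_cunion; intro m.
    apply meas_inter2; [apply Hf | apply borel_gt, Hg].
Qed.

End Measurability.

(* If measurable sets A k n cover each fiber for every k and force the dense
   section D n to be 1/(k+1)-close to s, then s is a Borel section: the set
   {d(y,s) < a} is the countable union of A k n /\ {d(y, D n) < a - 1/(k+1)}. *)
Lemma borel_section_of_locating_sets {Om : Type} (S : SigmaAlgebra Om) (X : Om -> Type)
    (d : forall w, X w -> X w -> R) (L : (forall w, X w) -> Prop)
    (Hmet : forall w, IsMetric (d w)) (HL : BorelStructure S X d L)
    (D : nat -> forall w, X w) (HD : forall n, L (D n))
    (s : forall w, X w) (A : nat -> nat -> Om -> Prop) :
  (forall k n, meas S (A k n)) ->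
  (forall k n w, A k n w -> d w (D n w) (s w) < / (INR k + 1)) ->
  (forall k w, exists n, A k n w) ->
  L s.
Proof.
  intros HA Hclose Hcover; apply (proj1 (proj2 HL)); intros y Hy a.
  apply meas_ext with (A := fun w => exists k n : nat,
      A k n w /\ d w (y w) (D n w) < a - / (INR k + 1)).
  - intro w; split.
    + intros [k [n [Akn H]]].
      pose proof (Hclose k n w Akn); pose proof (met_tri (d w) (Hmet w) (y w) (D n w) (s w)); lra.
    + intro H; destruct (arch_inv ((a - d w (y w) (s w)) / 2) ltac:(lra)) as [k Hk].
      destruct (Hcover k w) as [n Akn]; exists k, n; split; auto.
      pose proof (Hclose k n w Akn); pose proof (met_tri (d w) (Hmet w) (y w) (s w) (D n w)).
      rewrite (met_sym (d w) (Hmet w) (s w)) in H1; lra.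
  - apply meas_cunion; intro k; apply meas_cunion; intro n.
    apply meas_inter2; [apply HA | apply (proj1 HL); auto].
Qed.

Theorem mainTheorem11 (Om : Type) (S : SigmaAlgebra Om) (X : Om -> Type)
    (d : forall w, X w -> X w -> R) (L : (forall w, X w) -> Prop)
    (Hmet : forall w, IsMetric (d w)) (Hcat : forall w, CAT0 (d w))
    (Hprop : forall w, Proper (d w)) (Hunb : forall w, Unbounded (d w))
    (HL : BorelStructure S X d L)
    (x0 : forall w, X w) (Hx0 : L x0)
    (x : forall w, X w) (Hx : L x)
    (xi : forall w, R -> X w) (Hxi : forall w, IsRay (d w) (xi w))
    (Hxib : BorelBoundarySection S X d L x0 xi) :
  forall t : R, 0 <= t ->
  forall s : forall w, X w,
    (forall w, exists c, RayTo (d w) c (x w) (xi w) /\ s w = c t) ->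
    L s.
Proof.
  intros t Ht s Hs.
  pose proof HL as [HL1 [_ [D [HD Hdense]]]].
  destruct (Hxib x Hx) as [gx [Bgx Hgx]].
  destruct (functional_choice (fun (n : nat) (g : Om -> R) => BorelFun S g /\
              forall w, BusemannVal (d w) (x0 w) (xi w) (D n w) (g w))
              (fun n => Hxib (D n) (HD n))) as [G HG].
  set (r := fun k : nat => / (INR k + 1)).
  assert (Hr : forall k, 0 < r k <= 1).
  { intro k; pose proof (pos_INR k); unfold r; split; [apply Rinv_0_lt_compat; lra|].
    rewrite <- Rinv_1; apply Rinv_le_contravar; lra. }
  set (del := fun k => r k ^2 / (4*t+2)).
  apply (borel_section_of_locating_sets S X d L Hmet HL D HD s
           (fun k n w => d w (x w) (D n w) < t + del k /\ G n w - gx w < - t + del k)).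
  - intros k n; apply meas_inter2; [apply HL1; auto | apply borel_diff; [apply HG | exact Bgx]].
  - intros k n w [A1 A2]; destruct (Hs w) as [c [Hc ->]].
    exact (proj2 (ray_point_located (d w) (Hmet w) (Hcat w) (x0 w) (xi w) (x w) c t (gx w)
                    Hc Ht (Hgx w) (r k) (D n w) (G n w) (Hr k) (proj2 (HG n) w)) A1 A2).
  - intros k w; destruct (Hs w) as [c [Hc Hsw]].
    destruct (Hdense w (s w) (del k) ltac:(unfold del; apply Rdiv_lt_0_compat;
                pose proof (Hr k); nra)) as [n Hn].
    exists n; rewrite (met_sym (d w) (Hmet w)), Hsw in Hn.
    exact (proj1 (ray_point_located (d w) (Hmet w) (Hcat w) (x0 w) (xi w) (x w) c t (gx w)
                    Hc Ht (Hgx w) (r k) (D n w) (G n w) (Hr k) (proj2 (HG n) w)) Hn).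
Qed.
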